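(* Let $M$ be an $m\times n$ matrix over a field with all entries nonzero, where $m<n$. If every maximal ($m\times m$) minor $N$ of $M$ satisfies $\operatorname{crk}N<m$, then $\operatorname{crk}M<m$.
   Context: For a matrix $M$ with nonzero entries, the combinatorial rank $\operatorname{crk}M$ is the minimum of the number of classes of mutually proportional rows of $M$ and the number of classes of mutually proportional columns of $M$. A maximal minor here means the square submatrix formed by some $m$ columns. *)

From HB Require Import structures.
From mathcomp Require Import all_boot all_order all_algebra.
Set Implicit Arguments. Unset Strict Implicit. Unset Printing Implicit Defensive.
Import GRing.Theory.
Local Open Scope ring_scope.

Definition rows_prop (F : fieldType) (m n : nat) (A : 'M[F]_(m, n))
  (i j : 'I_m) : bool := (row j A <= row i A)%MS.

Definition row_classes (F : fieldType) (m n : nat) (A : 'M[F]_(m, n))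
  : {set {set 'I_m}} := [set [set j | rows_prop A i j] | i : 'I_m].

Definition col_classes (F : fieldType) (m n : nat) (A : 'M[F]_(m, n))
  : {set {set 'I_n}} := row_classes A^T.

Definition crk (F : fieldType) (m n : nat) (A : 'M[F]_(m, n)) : nat :=
  minn #|row_classes A| #|col_classes A|.

From mathcomp Require Import all_boot all_order all_algebra.
From mathcomp Require Import ring.
Set Implicit Arguments. Unset Strict Implicit. Unset Printing Implicit Defensive.
Import GRing.Theory.
Local Open Scope ring_scope.

(* For matrices without zero entries, two rows are proportional on a set S of
   columns iff all their 2x2 minors on S vanish. Suppose crk M >= m: the m rows
   are pairwise non-proportional and there are at least m classes of
   proportional columns. Grow a set S of pairwise non-proportional columns,
   keeping #|S| at most the number r(S) of proportionality classes of the rows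
   restricted to S. If r(S) < m, two rows proportional on S are not proportional
   on all columns, and a column separating them increases r(S); such a column is
   not proportional to any column of S, since otherwise it could not separate
   rows that agree on S. If r(S) = m, any column not proportional to those of S
   will do. Once #|S| = m (so r(S) = m as well), the columns S form an m x m
   minor whose rows and columns are pairwise non-proportional, i.e. a minor of
   combinatorial rank m. *)

(* The least element of each class; for an equivalence e, #|class_mins e| is the
   number of classes of e. *)
Definition class_mins (m : nat) (e : rel 'I_m) : {set 'I_m} :=
  [set i : 'I_m | [forall i' : 'I_m, (i' < i)%N ==> ~~ e i' i]].

Section ClassMins.
Variables (m : nat) (e : rel 'I_m).

Lemma class_minsP (i : 'I_m) :
  reflect (forall i' : 'I_m, (i' < i)%N -> ~~ e i' i) (i \in class_mins e).
Proof.
rewrite inE; apply: (iffP forallP) => [H i' | H i']; first exact/implyP.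
exact/implyP/H.
Qed.

Lemma class_mins_gt0 : (0 < m)%N -> (0 < #|class_mins e|)%N.
Proof.
move=> m_gt0; apply/card_gt0P; exists (Ordinal m_gt0).
by apply/class_minsP => i'; rewrite ltn0.
Qed.

Hypotheses (e_refl : reflexive e) (e_sym : symmetric e) (e_trans : transitive e).

Lemma exists_class_min x :
  exists2 y : 'I_m, e x y & forall z, e x z -> (y <= z)%N.
Proof. by case: (arg_minnP val (e_refl x)) => y exy ymin; exists y. Qed.

Lemma class_min_in_mins x (y : 'I_m) :
  e x y -> (forall z, e x z -> (y <= z)%N) -> y \in class_mins e.
Proof.
move=> exy ymin; apply/class_minsP => z ltzy; apply/negP => ezy.
have exz : e x z by apply: e_trans exy _; rewrite e_sym.
by have := ymin z exz; rewrite leqNgt ltzy.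
Qed.

Lemma class_mins_full : (m <= #|class_mins e|)%N -> forall i j, e i j -> i = j.
Proof.
move=> full.
have minsT : class_mins e = setT.
  by apply/eqP; rewrite eqEcard subsetT cardsT card_ord.
have sep (i j : 'I_m) : (i < j)%N -> ~~ e i j.
  by move=> ltij; have /class_minsP/(_ i ltij) : j \in class_mins e by rewrite minsT inE.
move=> i j eij; case: (ltngtP i j) => [/sep | /sep | /val_inj //].
  by rewrite eij.
by rewrite e_sym eij.
Qed.

End ClassMins.

Section ClassMinsRefinement.
Variables (m : nat) (e e' : rel 'I_m).
Hypotheses (e_sym : symmetric e) (e_trans : transitive e).
Hypotheses (e'_refl : reflexive e') (e'_sym : symmetric e') (e'_trans : transitive e').
Hypothesis e'_sub : subrel e' e.

Lemma class_mins_subset : class_mins e \subset class_mins e'.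
Proof.
apply/subsetP => i /class_minsP mins_i; apply/class_minsP => i' lt_i'i.
by apply: contra (mins_i i' lt_i'i); apply: e'_sub.
Qed.

Lemma class_mins_proper a b :
  e a b -> ~~ e' a b -> class_mins e \proper class_mins e'.
Proof.
move=> eab ne'ab; rewrite properE class_mins_subset /=.
have e_refl : reflexive e by move=> x; apply: e'_sub.
have [r ear rmin] := exists_class_min e_refl a.
have [x erx ne'rx] : exists2 x, e r x & ~~ e' r x.
  case: (boolP (e' r a)) => [e'ra | ne'ra]; last by exists a; rewrite // e_sym.
  exists b; first by apply: e_trans eab; rewrite e_sym.
  by apply: contra ne'ab; apply: e'_trans; rewrite e'_sym.
have [y e'xy ymin] := exists_class_min e'_refl x.
apply/subsetPn; exists y; first exact: class_min_in_mins e'xy ymin.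
have ery : e r y := e_trans erx (e'_sub e'xy).
have ltry : (r < y)%N.
  rewrite ltn_neqAle rmin ?andbT; last exact: e_trans ear ery.
  by apply: contra ne'rx => /eqP/val_inj ->; rewrite e'_sym.
by apply/class_minsP => /(_ r ltry); rewrite ery.
Qed.

End ClassMinsRefinement.

Definition rows_prop_on (F : fieldType) (m n : nat) (A : 'M[F]_(m, n))
    (S : {set 'I_n}) : rel 'I_m :=
  fun i j => [forall k in S, forall l in S, A i k * A j l == A i l * A j k].

Definition pairwise_nonprop (F : fieldType) (m n : nat) (A : 'M[F]_(m, n))
    (S : {set 'I_m}) : Prop :=
  {in S &, forall i j, rows_prop_on A setT i j -> i = j}.

Section RowsPropOn.
Variables (F : fieldType) (m n : nat) (A : 'M[F]_(m, n)).

Lemma rows_prop_onP (S : {set 'I_n}) i j :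
  reflect (forall k l, k \in S -> l \in S -> A i k * A j l = A i l * A j k)
          (rows_prop_on A S i j).
Proof.
apply: (iffP forallP) => [H k l kS lS | H k].
  by move/implyP: (H k) => /(_ kS) /forallP /(_ l) /implyP /(_ lS) /eqP.
by apply/implyP => kS; apply/forallP => l; apply/implyP => lS; apply/eqP/H.
Qed.

Lemma rows_prop_on_refl (S : {set 'I_n}) : reflexive (rows_prop_on A S).
Proof. by move=> i; apply/rows_prop_onP => k l _ _; rewrite mulrC. Qed.

Lemma rows_prop_on_sym (S : {set 'I_n}) : symmetric (rows_prop_on A S).
Proof.
suff imp i j : rows_prop_on A S i j -> rows_prop_on A S j i.
  by move=> i j; apply/idP/idP; apply: imp.
move/rows_prop_onP => H; apply/rows_prop_onP => k l kS lS.
by rewrite mulrC [RHS]mulrC H.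
Qed.

Lemma rows_prop_onS (S T : {set 'I_n}) :
  S \subset T -> subrel (rows_prop_on A T) (rows_prop_on A S).
Proof.
move=> sST i j /rows_prop_onP H; apply/rows_prop_onP => k l kS lS.
by apply: H; apply: (subsetP sST).
Qed.

Hypothesis nzA : forall i j, A i j != 0.

Lemma rows_prop_on_trans (S : {set 'I_n}) : transitive (rows_prop_on A S).
Proof.
move=> j i h /rows_prop_onP Hij /rows_prop_onP Hjh; apply/rows_prop_onP => k l kS lS.
apply: (mulIf (mulf_neq0 (nzA j k) (nzA j l))).
transitivity ((A i k * A j l) * (A j k * A h l)); first by ring.
by rewrite Hij // Hjh //; ring.
Qed.

Lemma rows_prop_on_pivot (S : {set 'I_n}) s i j :
  s \in S -> (forall k, k \in S -> A i k * A j s = A i s * A j k) ->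
  rows_prop_on A S i j.
Proof.
move=> sS H; apply/rows_prop_onP => k l kS lS.
apply: (mulIf (mulf_neq0 (nzA i s) (nzA j s))).
transitivity ((A i k * A j s) * (A i s * A j l)); first by ring.
by rewrite (H k kS) -(H l lS); ring.
Qed.

Lemma rows_propE i j : rows_prop A i j = rows_prop_on A setT i j.
Proof.
apply/idP/idP.
  case/submxP => D eD; apply/rows_prop_onP => k l _ _.
  have e k' : A j k' = D 0 0 * A i k'.
    by have := congr1 (fun B : 'M_(1, n) => B 0 k') eD; rewrite !mxE big_ord1 !mxE.
  by rewrite !e; ring.
move/rows_prop_onP => H; case: n A nzA H => [|n'] B nzB H.
  by apply/submxP; exists 0; apply/matrixP => a [].
apply/submxP; exists ((B j 0 / B i 0)%:M).
rewrite mul_scalar_mx; apply/rowP => k; rewrite !mxE.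
apply: (mulIf (nzB i 0)).
by rewrite mulrAC divfK // mulrC H ?inE // mulrC.
Qed.

Lemma rows_prop_class_eq i j :
  rows_prop_on A setT i j -> [set k | rows_prop A i k] = [set k | rows_prop A j k].
Proof.
move=> pij; have pji : rows_prop_on A setT j i by rewrite rows_prop_on_sym.
apply/setP => k; rewrite !inE !rows_propE; apply/idP/idP.
  exact: rows_prop_on_trans pji.
exact: rows_prop_on_trans pij.
Qed.

Lemma row_classes_fullP :
  reflect (forall i j, rows_prop_on A setT i j -> i = j) (m <= #|row_classes A|)%N.
Proof.
rewrite -[X in (X <= _)%N]card_ord.
apply: (iffP idP) => [full i j pij | inj].
  have /imset_injP inj_cls : #|row_classes A| == #|'I_m|.
    by rewrite eqn_leq full andbT leq_imset_card.
  exact: inj_cls (rows_prop_class_eq pij).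
suff /imset_injP/eqP <- :
  {in 'I_m &, injective (fun i => [set k | rows_prop A i k])} by [].
move=> i j _ _ eq_cls; apply: inj; rewrite -rows_propE.
have : j \in [set k | rows_prop A j k] by rewrite inE /rows_prop submx_refl.
by rewrite -eq_cls inE.
Qed.

Lemma exists_nonprop_row (S : {set 'I_m}) :
  (#|S| < #|row_classes A|)%N ->
  exists j, forall s, s \in S -> ~~ rows_prop_on A setT s j.
Proof.
move=> ltS.
have : ~~ (row_classes A \subset [set [set k | rows_prop A s k] | s in S]).
  apply: contraTN ltS => /subset_leq_card le.
  by rewrite -leqNgt (leq_trans le) // leq_imset_card.
case/subsetPn => _ /imsetP [j _ ->] notin; exists j => s sS.
apply: contra notin => psj; apply/imsetP; exists s => //.
exact: esym (rows_prop_class_eq psj).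
Qed.

Lemma exists_separating_col (S : {set 'I_n}) s i j :
  s \in S -> ~~ rows_prop_on A setT i j -> exists k, ~~ rows_prop_on A (k |: S) i j.
Proof.
move=> sS npij.
have [/existsP // | /existsPn all_prop] :=
  boolP [exists k, ~~ rows_prop_on A (k |: S) i j].
case/negP: npij; apply: (@rows_prop_on_pivot setT s) => // k _.
by have /negPn/rows_prop_onP := all_prop k; apply; rewrite !inE ?eqxx ?sS ?orbT.
Qed.

Lemma pairwise_nonprop_setU1 (S : {set 'I_m}) j :
  pairwise_nonprop A S -> (forall s, s \in S -> ~~ rows_prop_on A setT s j) ->
  pairwise_nonprop A (j |: S).
Proof.
move=> nonpropS newj a b; rewrite !inE => /predU1P[-> | aS] /predU1P[-> | bS] //.
- by rewrite rows_prop_on_sym => pbj; case/negP: (newj b bS).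
- by move=> paj; case/negP: (newj a aS).
- exact: nonpropS.
Qed.

End RowsPropOn.

Section Submatrices.
Variables (F : fieldType) (m n : nat) (A : 'M[F]_(m, n)).

Lemma rows_prop_on_colsub p (f : 'I_p -> 'I_n) (S : {set 'I_p}) i j :
  rows_prop_on (colsub f A) S i j = rows_prop_on A (f @: S) i j.
Proof.
apply/rows_prop_onP/rows_prop_onP
  => [H _ _ /imsetP[k kS ->] /imsetP[l lS ->] | H k l kS lS].
  by have := H k l kS lS; rewrite !mxE.
by rewrite !mxE; apply: H; apply: imset_f.
Qed.

Lemma rows_prop_on_rowsub p (f : 'I_p -> 'I_m) (S : {set 'I_n}) i j :
  rows_prop_on (rowsub f A) S i j = rows_prop_on A S (f i) (f j).
Proof.
by apply/rows_prop_onP/rows_prop_onP => H k l kS lS; have := H k l kS lS; rewrite !mxE.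
Qed.

End Submatrices.

Lemma exists_ord_enumeration (T : finType) (S : {set T}) p :
  #|S| = p -> exists2 f : 'I_p -> T, injective f & f @: setT = S.
Proof.
move=> cardS; exists (fun k => enum_val (cast_ord (esym cardS) k)).
  by move=> x y /enum_val_inj/cast_ord_inj.
apply/setP => x; apply/imsetP/idP => [[k _ ->] | xS]; first exact: enum_valP.
by exists (cast_ord cardS (enum_rank_in xS x)); rewrite // cast_ordK enum_rankK_in.
Qed.

Section GoodColumns.
Variables (F : fieldType) (m n : nat) (M : 'M[F]_(m, n)).
Hypotheses (nzM : forall i j, M i j != 0) (m_gt0 : (0 < m)%N).
Hypothesis rows_nonprop : forall i j, rows_prop_on M setT i j -> i = j.
Hypothesis cols_many : (m <= #|row_classes M^T|)%N.

Local Notation nclasses S := #|class_mins (rows_prop_on M S)|.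

Let nzMT i j : M^T i j != 0. Proof. by rewrite mxE. Qed.

Lemma rows_prop_on_setU1 (S : {set 'I_n}) s k i j :
  s \in S -> rows_prop_on M^T setT s k -> rows_prop_on M S i j ->
  rows_prop_on M (k |: S) i j.
Proof.
move=> sS /rows_prop_onP psk pij.
apply: (@rows_prop_on_pivot _ _ _ _ nzM _ s); first by rewrite !inE sS orbT.
move=> l; rewrite !inE => /predU1P [-> | lS]; last by move/rows_prop_onP: pij; apply.
by have := psk i j; rewrite !inE !mxE => /(_ isT isT) e; rewrite mulrC -e.
Qed.

Lemma nclasses_setU1 (S : {set 'I_n}) k : (nclasses S <= nclasses (k |: S))%N.
Proof.
apply/subset_leq_card/class_mins_subset/rows_prop_onS.
exact: subsetUr.
Qed.

Lemma exists_refining_col (S : {set 'I_n}) :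
  S != set0 -> (nclasses S < m)%N ->
  exists2 k, (forall s, s \in S -> ~~ rows_prop_on M^T setT s k)
           & (nclasses S < nclasses (k |: S))%N.
Proof.
move=> /set0Pn [s sS] ltm.
have /subsetPn [i _] : ~~ (setT \subset class_mins (rows_prop_on M S)).
  by apply: contraTN ltm => /subset_leq_card; rewrite cardsT card_ord -leqNgt.
rewrite inE negb_forall => /existsP [i']; rewrite negb_imply negbK => /andP [lti'i pS].
have npT : ~~ rows_prop_on M setT i' i.
  by apply: contraTN lti'i => /rows_nonprop ->; rewrite ltnn.
have [k npk] := exists_separating_col nzM sS npT.
exists k => [s' s'S | ].
  by apply: contra npk => ps'k; apply: rows_prop_on_setU1 s'S ps'k pS.
have refines : subrel (rows_prop_on M (k |: S)) (rows_prop_on M S).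
  exact/rows_prop_onS/subsetUr.
apply: proper_card.
exact: (class_mins_proper (rows_prop_on_sym M S) (rows_prop_on_trans nzM (S := S))
  (rows_prop_on_refl M _) (rows_prop_on_sym M _) (rows_prop_on_trans nzM (S := k |: S))
  refines pS npk).
Qed.

Lemma exists_good_cols :
  exists S, [/\ pairwise_nonprop M^T S, #|S| = m & (m <= nclasses S)%N].
Proof.
suff good k : (0 < k <= m)%N ->
  exists S, [/\ pairwise_nonprop M^T S, #|S| = k & (k <= nclasses S)%N].
  by apply: good; rewrite m_gt0 leqnn.
elim: k => [//|k IH] /andP [_ ltkm].
have [-> | k_gt0] := posnP k.
  have [j _] : exists j, forall s, s \in set0 -> ~~ rows_prop_on M^T setT s j.
    by apply: exists_nonprop_row; rewrite // cards0 (leq_trans m_gt0).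
  exists [set j]; split; last exact: class_mins_gt0.
    by move=> a b /set1P -> /set1P ->.
  exact: cards1.
have [S [nonpropS cardS le_kS]] := IH (introT andP (conj k_gt0 (ltnW ltkm))).
have [j newj ltS] : exists2 j, (forall s, s \in S -> ~~ rows_prop_on M^T setT s j)
                             & (k < nclasses (j |: S))%N.
  case: (ltnP (nclasses S) m) => [ltm | gem].
    have S0 : S != set0 by rewrite -card_gt0 cardS.
    have [j newj lt] := exists_refining_col S0 ltm.
    by exists j => //; apply: leq_trans lt.
  have [j newj] : exists j, forall s, s \in S -> ~~ rows_prop_on M^T setT s j.
    by apply: exists_nonprop_row; rewrite // cardS (leq_trans ltkm).
  by exists j => //; apply: leq_trans (nclasses_setU1 S j); apply: leq_trans gem.
have jS : j \notin S by apply/negP => /newj; rewrite rows_prop_on_refl.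
exists (j |: S); split => //; first exact: pairwise_nonprop_setU1.
by rewrite cardsU1 jS cardS.
Qed.

End GoodColumns.

Theorem lemma5p19 (F : fieldType) (m n : nat) (M : 'M[F]_(m, n)) :
  (m < n)%N ->
  (forall i j, M i j != 0) ->
  (forall f : 'I_m -> 'I_n, injective f -> (crk (colsub f M) < m)%N) ->
  (crk M < m)%N.
Proof.
move=> ltmn nzM minors.
have widen_inj : injective (widen_ord (ltnW ltmn)) by move=> i j [] /val_inj.
have m_gt0 : (0 < m)%N := leq_ltn_trans (leq0n _) (minors _ widen_inj).
rewrite ltnNge /crk leq_min.
apply/negP => /andP [/(row_classes_fullP nzM) rows_nonprop cols_many].
have [S [nonpropS cardS sepS]] := exists_good_cols nzM m_gt0 rows_nonprop cols_many.
have [f injf imf] := exists_ord_enumeration cardS.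
have nzN i j : colsub f M i j != 0 by rewrite mxE.
have nzNT i j : (colsub f M)^T i j != 0 by rewrite !mxE.
have := minors f injf; rewrite ltnNge /crk leq_min => /negP; apply; apply/andP; split.
  apply/(row_classes_fullP nzN) => i j; rewrite rows_prop_on_colsub imf.
  exact: class_mins_full (rows_prop_on_sym M S) sepS i j.
apply/(row_classes_fullP nzNT) => k l; rewrite trmx_mxsub rows_prop_on_rowsub => pkl.
by apply: injf; apply: nonpropS pkl; rewrite -imf imset_f.
Qed.
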